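(* The irreducible $\lambda$-quiddities over $(\mathbb{Z}/2\mathbb{Z})\times(\mathbb{Z}/3\mathbb{Z})$ are exactly, up to cyclic permutation, the following (entries are pairs (residue mod 2, residue mod 3)): - $((1,1),(1,1),(1,1))$, $((1,-1),(1,-1),(1,-1))$; - $((0,0),(0,0),(0,0),(0,0))$, $((0,0),(0,1),(0,0),(0,-1))$, $((0,0),(1,0),(0,0),(1,0))$, $((0,1),(0,-1),(0,1),(0,-1))$, $((1,0),(0,-1),(1,0),(0,1))$; - $((1,0),(1,0),(1,0),(1,0),(1,0),(1,0))$, $((0,1),(0,1),(0,1),(0,1),(0,1),(0,1))$, $((0,-1),(0,-1),(0,-1),(0,-1),(0,-1),(0,-1))$.
   Context: For $a_1,\ldots,a_n$ in a commutative unital ring $A$, $M_n(a_1,\ldots,a_n)=\begin{pmatrix}a_n&-1\\1&0\end{pmatrix}\cdots\begin{pmatrix}a_1&-1\\1&0\end{pmatrix}$. An $n$-tuple $(a_1,\ldots,a_n)\in A^n$ is a $\lambda$-quiddity over $A$ if $M_n(a_1,\ldots,a_n)=\pm\mathrm{Id}$. For $(a_1,\ldots,a_n)\in A^n$, $(b_1,\ldots,b_m)\in A^m$, define $(a_1,\ldots,a_n)\oplus(b_1,\ldots,b_m)=(a_1+b_m,a_2,\ldots,a_{n-1},a_n+b_1,b_2,\ldots,b_{m-1})$. Write $(a_1,\ldots,a_n)\sim(b_1,\ldots,b_n)$ if $(b_1,\ldots,b_n)$ is obtained from $(a_1,\ldots,a_n)$ or from $(a_n,\ldots,a_1)$ by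 a cyclic permutation. A $\lambda$-quiddity $(c_1,\ldots,c_n)$ with $n\ge3$ is reducible if there exist a $\lambda$-quiddity $(b_1,\ldots,b_l)$ and a tuple $(a_1,\ldots,a_m)$ with $l,m\ge3$ and $(c_1,\ldots,c_n)\sim(a_1,\ldots,a_m)\oplus(b_1,\ldots,b_l)$; it is irreducible otherwise (by convention $(0,0)$ is reducible). *)

From HB Require Import structures.
From mathcomp Require Import all_boot all_order all_algebra.
Set Implicit Arguments. Unset Strict Implicit. Unset Printing Implicit Defensive.
Import Order.TTheory GRing.Theory.
Local Open Scope ring_scope.

Definition A : comNzRingType := ('Z_2 * 'Z_3)%type.

Definition pr (x : 'Z_2) (y : 'Z_3) : A := (x, y).

Definition elem (R : comNzRingType) (a : R) : 'M[R]_2 :=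
  \matrix_(i < 2, j < 2)
    (if (i == 0) && (j == 0) then a
     else if (i == 0) && (j == 1) then -1
     else if (i == 1) && (j == 0) then 1 else 0).

Definition Mq (R : comNzRingType) (s : seq R) : 'M[R]_2 :=
  foldl (fun M a => elem a *m M) 1%:M s.

Definition lambda_quiddity (R : comNzRingType) (s : seq R) : Prop :=
  Mq s = 1%:M \/ Mq s = - 1%:M.

(* (a_1..a_m) (+) (b_1..b_l) = (a_1+b_l, a_2..a_{m-1}, a_m+b_1, b_2..b_{l-1}) *)
Definition oplus (R : comNzRingType) (a b : seq R) : seq R :=
  (a`_0 + b`_(size b).-1)
    :: take (size a - 2) (drop 1 a)
    ++ (a`_(size a).-1 + b`_0) :: take (size b - 2) (drop 1 b).

Definition qsim (R : comNzRingType) (c d : seq R) : Prop :=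
  exists k, d = rot k c \/ d = rot k (rev c).

Definition reducible (R : comNzRingType) (c : seq R) : Prop :=
  exists (a b : seq R),
    (3 <= size a)%N /\ (3 <= size b)%N /\ lambda_quiddity b /\ qsim c (oplus a b).

(* irreducible lambda-quiddity: n >= 3 (so the conventional (0,0) is excluded) *)
Definition irreducible_quiddity (R : comNzRingType) (c : seq R) : Prop :=
  (3 <= size c)%N /\ lambda_quiddity c /\ ~ reducible c.

Definition irr_list : seq (seq A) :=
  [:: [:: pr 1 1; pr 1 1; pr 1 1];
      [:: pr 1 (-1); pr 1 (-1); pr 1 (-1)];
      [:: pr 0 0; pr 0 0; pr 0 0; pr 0 0];
      [:: pr 0 0; pr 0 1; pr 0 0; pr 0 (-1)];
      [:: pr 0 0; pr 1 0; pr 0 0; pr 1 0];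
      [:: pr 0 1; pr 0 (-1); pr 0 1; pr 0 (-1)];
      [:: pr 1 0; pr 0 (-1); pr 1 0; pr 0 1];
      [:: pr 1 0; pr 1 0; pr 1 0; pr 1 0; pr 1 0; pr 1 0];
      [:: pr 0 1; pr 0 1; pr 0 1; pr 0 1; pr 0 1; pr 0 1];
      [:: pr 0 (-1); pr 0 (-1); pr 0 (-1); pr 0 (-1); pr 0 (-1); pr 0 (-1)]].

From mathcomp Require Import all_boot all_order all_algebra.
From mathcomp Require Import ring zify.
Set Implicit Arguments. Unset Strict Implicit. Unset Printing Implicit Defensive.
Import GRing.Theory.
Local Open Scope ring_scope.

(* Over any commutative ring, write M(w) for the matrix of a word w.  Since
   M(x w y) = elem y * M(w) * elem x has bottom-right entry -M(w)_00, a word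
   x w y can be a lambda-quiddity only if M(w)_00 = +-1; conversely, using
   det M(w) = 1, any word w with M(w)_00 = +-1 ("closable") extends to a
   lambda-quiddity x w y.  As (a_0 .. a_m) (+) (x w y) is, up to rotation,
   the word w followed by a shortened copy of a, a lambda-quiddity c of length
   n is reducible iff some rotation of c or of its reverse has a closable
   prefix of length between 1 and n - 3 ("splittable" words).

   Over A, the closable letters are the units +-1 and every word of length 4
   has a closable factor; hence irreducible lambda-quiddities have length at
   most 6 and, from length 4 on, letters other than +-1.  The finitely many
   remaining candidates are checked by evaluation, for which 2x2 matrices are
   represented by computable quadruples. *)

Section CommutativeRing.
Variable R : comNzRingType.

(* The matrix [[p, q], [r, s]] stored as (p, q, r, s): unlike 'M[R]_2, this
   representation can be evaluated by vm_compute. *)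
Definition quad : Type := (R * R * R * R)%type.

Definition quad_mx (m : quad) : 'M[R]_2 :=
  let: (p, q, r, s) := m in
  \matrix_(i < 2, j < 2)
    (if i == 0 then (if j == 0 then p else q) else (if j == 0 then r else s)).

Lemma quad_mx_inj : injective quad_mx.
Proof.
move=> [[[p q] r] s] [[[p' q'] r'] s'] /= E.
have := congr1 (fun M : 'M[R]_2 => (M 0 0, M 0 1, M 1 0, M 1 1)) E.
by rewrite !mxE /= => [[-> -> -> ->]].
Qed.

Definition quad_scalar (a : R) : quad := (a, 0, 0, a).

Lemma quad_mx_scalar (a : R) : quad_mx (quad_scalar a) = a%:M.
Proof.
apply/matrixP => i j; rewrite !mxE.
by case: i => [[|[|i]] Hi] //; case: j => [[|[|j]] Hj].
Qed.

Definition quad_elem (a : R) (m : quad) : quad :=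
  let: (p, q, r, s) := m in (a * p - r, a * q - s, p, q).

Lemma elem_quad_mx a m : elem a *m quad_mx m = quad_mx (quad_elem a m).
Proof.
case: m => [[[p q] r] s] /=; apply/matrixP => i j.
rewrite !mxE big_ord_recl big_ord1 !mxE.
by case: i => [[|[|i]] Hi] //; case: j => [[|[|j]] Hj] //=; rewrite ?mxE /=; ring.
Qed.

Definition quad_mul (m1 m2 : quad) : quad :=
  let: (p, q, r, s) := m1 in let: (p', q', r', s') := m2 in
  (p * p' + q * r', p * q' + q * s', r * p' + s * r', r * q' + s * s').

Definition quad_det (m : quad) : R := let: (p, q, r, s) := m in p * s - q * r.

Definition quad_word (m : quad) (w : seq R) : quad :=
  foldl (fun m a => quad_elem a m) m w.

Definition mq (w : seq R) : quad := quad_word (quad_scalar 1) w.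

Lemma Mq_quad w : Mq w = quad_mx (mq w).
Proof.
rewrite /Mq /mq /quad_word -quad_mx_scalar.
by elim: w (quad_scalar 1) => [|a w IH] m //=; rewrite elem_quad_mx IH.
Qed.

Lemma quad_word_mul w m : quad_word m w = quad_mul (mq w) m.
Proof.
rewrite /mq; elim: w m => [|a w IH] m /=.
  by case: m => [[[p q] r] s] /=; congr (_, _, _, _); ring.
rewrite [LHS]IH [in RHS]IH.
case: (quad_word _ w) => [[[p q] r] s]; case: m => [[[p' q'] r'] s'] /=.
by congr (_, _, _, _); ring.
Qed.

Lemma quad_det_mq w : quad_det (mq w) = 1.
Proof.
elim/last_ind: w => [|w a IH]; first by rewrite /= mulr1 mulr0 subr0.
rewrite /mq /quad_word foldl_rcons -/(quad_word _ w) -/(mq w).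
by move: IH; case: (mq w) => [[[p q] r] s] /= <-; ring.
Qed.

Lemma mq_cons_rcons x w y :
  mq (x :: rcons w y) = quad_elem y (quad_mul (mq w) (quad_elem x (quad_scalar 1))).
Proof. by rewrite /mq /= /quad_word foldl_rcons -/(quad_word _ w) quad_word_mul. Qed.

Definition is_quiddity (c : seq R) : bool :=
  (mq c == quad_scalar 1) || (mq c == quad_scalar (-1)).

Lemma lambda_quiddityP c : lambda_quiddity c <-> is_quiddity c.
Proof.
rewrite /lambda_quiddity /is_quiddity Mq_quad -scaleN1r scalemx1 -!quad_mx_scalar.
split; first by case=> /quad_mx_inj ->; rewrite eqxx ?orbT.
by case/orP=> /eqP ->; [left | right].
Qed.

Definition pm1 (x : R) : bool := (x == 1) || (x == -1).

Definition closable (w : seq R) : bool := pm1 (mq w).1.1.1.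

Lemma closable1 x : closable [:: x] = pm1 x.
Proof. by rewrite /closable /= mulr1 subr0. Qed.

(* The bottom-right entry of M(x w y) is minus the top-left entry of M(w). *)
Lemma closable_of_quiddity x w y : is_quiddity (x :: rcons w y) -> closable w.
Proof.
rewrite /is_quiddity /closable mq_cons_rcons.
case: (mq w) => [[[p q] r] s] /=.
case/orP => /eqP [_ _ _ E]; have -> : p = - (p * (x * 0 - 1) + q * 0) by ring.
  by rewrite /pm1 E eqxx orbT.
by rewrite /pm1 E opprK eqxx.
Qed.

(* With p = M(w)_00 = +-1, the letters x = -pq and y = pr close w. *)
Lemma quiddity_of_closable w : closable w -> exists x y, is_quiddity (x :: rcons w y).
Proof.
rewrite /closable; have := quad_det_mq w.
case Emq: (mq w) => [[[p q] r] s] /= det1 Hp.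
have pp1 : p * p - 1 = 0.
  by apply/eqP; rewrite subr_eq0; case/orP: Hp => /eqP ->; rewrite ?mulrNN mulr1.
have det0 : p * s - q * r - 1 = 0 by rewrite det1 subrr.
exists (- (p * q)), (p * r); rewrite /is_quiddity.
suff -> : mq (- (p * q) :: rcons w (p * r)) = quad_scalar (- p).
  by case/orP: Hp => /eqP ->; rewrite ?opprK eqxx ?orbT.
rewrite mq_cons_rcons Emq /=; congr (_, _, _, _).
- apply/eqP; rewrite -subr_eq0; apply/eqP.
  transitivity ((s - p * q * r) * (p * p - 1) - p * (p * s - q * r - 1)); first by ring.
  by rewrite pp1 det0 !mulr0 subr0.
- by transitivity (- r * (p * p - 1)); [ring | rewrite pp1 mulr0].
- by transitivity (- q * (p * p - 1)); [ring | rewrite pp1 mulr0].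
- by ring.
Qed.

Lemma oplus_cons_rcons (a0 al x y : R) (am w : seq R) :
  oplus (a0 :: rcons am al) (x :: rcons w y) = (a0 + y :: rcons am (al + x)) ++ w.
Proof.
rewrite /oplus /= !size_rcons /= !subn2 /= !drop0 !nth_rcons !ltnn !eqxx.
by rewrite -!cats1 !take_size_cat // -catA.
Qed.

Definition splittable (c : seq R) : bool :=
  has (fun k => has (fun j => closable (take j (rot k c))) (iota 1 (size c - 3)))
      (iota 0 (size c).+1).

Lemma splittable_intro c k j : (0 < j)%N -> (j + 3 <= size c)%N ->
  closable (take j (rot k c)) -> splittable c.
Proof.
move=> Hj Hjn; rewrite (rot_minn k) => Hb.
apply/hasP; exists (minn k (size c)); first by rewrite mem_iota ltnS geq_minr.
by apply/hasP; exists j => //; rewrite mem_iota; lia.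
Qed.

(* A closable prefix w of rot k c, completed to a lambda-quiddity x w y,
   splits c as (rest of rot k c, corrected at its ends) (+) (x w y). *)
Lemma reducible_of_splittable c : splittable c -> reducible c.
Proof.
case/hasP => k _ /hasP [j]; rewrite mem_iota => /andP [Hj1 Hj2] Hb.
have [x [y Hq]] := quiddity_of_closable Hb.
have Hv : (3 <= size (drop j (rot k c)))%N by rewrite size_drop size_rot; lia.
have Ej : rot j (rot k c) = drop j (rot k c) ++ take j (rot k c) by [].
move: Hv Ej; case: (drop j _) => [|v0 v'] //; case/lastP: v' => [|vm vl] //.
rewrite /= size_rcons => Hv Ej.
exists (v0 - y :: rcons vm (vl - x)), (x :: rcons (take j (rot k c)) y).
split; first by rewrite /= size_rcons.
split; first by rewrite /= size_rcons size_take size_rot; case: ifP; lia.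
split; first exact/lambda_quiddityP.
by exists (rot_add c k j); left; rewrite oplus_cons_rcons !subrK -rot_rot_add Ej.
Qed.

(* If c ~ a (+) (x w y), then w is a closable prefix of a rotation of c or of
   its reverse. *)
Lemma splittable_of_reducible c : reducible c -> splittable c || splittable (rev c).
Proof.
case=> a [b [Ha [Hb [Hq [k Hk]]]]].
move: Ha Hq Hk; case: a => [|a0 a'] //; case/lastP: a' => [|am al] //.
move: Hb; case: b => [|x b'] //; case/lastP: b' => [|w y] //.
rewrite /= !size_rcons => Hb Ha /lambda_quiddityP /closable_of_quiddity Hw.
rewrite oplus_cons_rcons.
set V := a0 + y :: rcons am (al + x).
have HV : size V = (size am).+2 by rewrite /= size_rcons.
have split_rot d : V ++ w = rot k d -> splittable d.
  move=> E; have Hs : size d = (size V + size w)%N by rewrite -(size_rot k) -E size_cat.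
  apply: (@splittable_intro d (rot_add d k (size V)) (size w)); first by [].
    by rewrite Hs HV; lia.
  by rewrite -rot_rot_add -E rot_size_cat take_size_cat.
by case=> E; rewrite (split_rot _ E) ?orbT.
Qed.

End CommutativeRing.

Definition alphabet : seq A :=
  [:: pr 0 0; pr 0 1; pr 0 (-1); pr 1 0; pr 1 1; pr 1 (-1)].
Definition letters_not_pm1 : seq A := [:: pr 0 0; pr 0 1; pr 0 (-1); pr 1 0].

Lemma mem_alphabet (x : A) : x \in alphabet.
Proof. by case: x => [[[|[|i]] Hi] [[|[|[|j]]] Hj]] //; vm_compute. Qed.

Fixpoint words (T : Type) (L : seq T) (n : nat) : seq (seq T) :=
  if n is n'.+1 then [seq a :: w | a <- L, w <- words L n'] else [:: [::]].

Lemma mem_words (T : eqType) (L : seq T) c : all (mem L) c -> c \in words L (size c).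
Proof.
elim: c => [|a c IH] //= /andP [Ha Hc].
by apply: (allpairs_f (fun a w => a :: w)) => //; apply: IH.
Qed.

Lemma mem_words_alphabet (c : seq A) : c \in words alphabet (size c).
Proof. by apply: mem_words; apply/allP => x _; apply: mem_alphabet. Qed.

Lemma closable_factor4 : all (fun w => has (fun i => has (fun j =>
    closable (take j (drop i w))) (iota 1 (4 - i))) (iota 0 4)) (words alphabet 4).
Proof. by vm_compute. Qed.

Lemma long_splittable (c : seq A) : (7 <= size c)%N -> splittable c.
Proof.
move=> Hn; have Hs : size (take 4 c) = 4%N by rewrite size_take; case: ifP; lia.
have := mem_words_alphabet (take 4 c); rewrite Hs => /(allP closable_factor4).
case/hasP => i; rewrite mem_iota add0n => /andP [_ Hi].
case/hasP => j; rewrite mem_iota => /andP [Hj1 Hj2] Hb.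
apply: (@splittable_intro A c i j); [lia | lia |].
suff <- : take j (drop i (take 4 c)) = take j (rot i c) by [].
rewrite /rot -{1}(subnK (ltnW Hi)) -take_drop take_takel; last by lia.
by rewrite take_cat size_drop ifT //; lia.
Qed.

Lemma pm1_or_letters : all (fun x => pm1 x || (x \in letters_not_pm1)) alphabet.
Proof. by vm_compute. Qed.

Lemma unsplittable_letters (c : seq A) : (4 <= size c)%N -> ~~ splittable c ->
  all (mem letters_not_pm1) c.
Proof.
move=> Hn Hb; apply/allP => x xc.
have Hi : (index x c < size c)%N by rewrite index_mem.
have Ex : take 1 (rot (index x c) c) = [:: x].
  by rewrite /rot (drop_nth x Hi) /= take0 nth_index.
have /orP [Hx|] // := allP pm1_or_letters x (mem_alphabet x).
case/negP: Hb; apply: (@splittable_intro A c (index x c) 1) => //.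
by rewrite Ex closable1.
Qed.

Definition in_irr_list_rot (c : seq A) : bool :=
  has (fun q => has (fun k => c == rot k q) (iota 0 (size q))) irr_list.

Definition classified (L : seq A) (n : nat) : bool :=
  all (fun c => is_quiddity c ==> ~~ splittable c ==> in_irr_list_rot c) (words L n).

Lemma classified3 : classified alphabet 3. Proof. by vm_compute. Qed.
Lemma classified4 : classified letters_not_pm1 4. Proof. by vm_compute. Qed.
Lemma classified5 : classified letters_not_pm1 5. Proof. by vm_compute. Qed.
Lemma classified6 : classified letters_not_pm1 6. Proof. by vm_compute. Qed.

Lemma unsplittable_in_irr_list (c : seq A) : (3 <= size c)%N -> is_quiddity c ->
  ~~ splittable c -> in_irr_list_rot c.
Proof.
move=> H3 Hq Hb.
have from_classified L : all (mem L) c -> classified L (size c) -> in_irr_list_rot c.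
  by move=> HL /allP /(_ c (mem_words HL)); rewrite Hq Hb.
case: (leqP 7 (size c)) => H7; first by rewrite long_splittable in Hb.
have Hl4 : (4 <= size c)%N -> all (mem letters_not_pm1) c by move/unsplittable_letters; apply.
move: H3 H7 Hl4 from_classified; case: (size c) => [|[|[|[|[|[|[|n]]]]]]] //= _ _ Hl4 HL.
- by apply: HL classified3; apply/allP => x _; apply: mem_alphabet.
- exact: HL (Hl4 isT) classified4.
- exact: HL (Hl4 isT) classified5.
- exact: HL (Hl4 isT) classified6.
Qed.

Lemma irr_list_unsplittable : all (fun q => (3 <= size q)%N && all (fun k =>
    [&& is_quiddity (rot k q), ~~ splittable (rot k q) & ~~ splittable (rev (rot k q))])
    (iota 0 (size q).+1)) irr_list.
Proof. by vm_compute. Qed.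

Lemma irr_list_irreducible q k : q \in irr_list -> irreducible_quiddity (rot k q).
Proof.
move=> qin; have /andP [H3 /allP Hall] := allP irr_list_unsplittable q qin.
rewrite rot_minn; have := Hall (minn k (size q)).
rewrite mem_iota ltnS geq_minr => /(_ isT) /and3P [Hq Hb1 Hb2].
split; first by rewrite size_rot.
split; first exact/lambda_quiddityP.
by move/splittable_of_reducible; rewrite (negbTE Hb1) (negbTE Hb2).
Qed.

Theorem proposition4p2 (c : seq A) :
  irreducible_quiddity c <->
  exists2 q, q \in irr_list & exists k : nat, c = rot k q.
Proof.
split; last by case=> q qin [k ->]; apply: irr_list_irreducible.
case=> H3 [/lambda_quiddityP Hq Hirr].
have Hb : ~~ splittable c by apply/negP => /reducible_of_splittable.
case/hasP: (unsplittable_in_irr_list H3 Hq Hb) => q qin /hasP [k _ /eqP ->].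
by exists q => //; exists k.
Qed.
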